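(* Let $n\geq 1$ and let $H$ be an irreducible subgroup of $SL(n,\mathbb{C})$. For every subgroup $A$ of $Z_n(H)$ one has $Z_{PSL(n,\mathbb{C})}\big(Z_{PSL(n,\mathbb{C})}(A)\big)=A$. In particular, every subgroup of $Z_n(H)$ is itself the centralizer in $PSL(n,\mathbb{C})$ of an irreducible subgroup of $PSL(n,\mathbb{C})$.
   Context: Let $\xi=e^{2\pi i/n}$ and $\pi_n:SL(n,\mathbb{C})\to PSL(n,\mathbb{C})=SL(n,\mathbb{C})/\langle\xi I_n\rangle$ the quotient map. A subgroup $H\le SL(n,\mathbb{C})$ is irreducible if no nonzero proper subspace of $\mathbb{C}^n$ is $H$-invariant; a subgroup of $PSL(n,\mathbb{C})$ is irreducible if its preimage under $\pi_n$ is. $Z_G(S)$ denotes the centralizer of $S$ in $G$, and $Z_n(H)=Z_{PSL(n,\mathbb{C})}(\pi_n(H))$. *)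

(* C is modelled by an arbitrary numClosedFieldType F
   (algebraically closed number field, e.g. algC; C is an instance). *)
From HB Require Import structures.
From mathcomp Require Import all_boot all_order all_algebra.
Set Implicit Arguments. Unset Strict Implicit. Unset Printing Implicit Defensive.
Import Order.TTheory GRing.Theory Num.Theory.
Local Open Scope ring_scope.

Definition mset (F : numClosedFieldType) (n : nat) := 'M[F]_n -> Prop.

Definition is_SL_subgroup (F : numClosedFieldType) (n : nat) (H : mset F n) : Prop :=
  [/\ forall g, H g -> \det g = 1,
      H 1%:M,
      forall g h, H g -> H h -> H (g *m h)
    & forall g, H g -> H (invmx g)].

(* Subgroups of PSL(n,F) = SL(n,F)/<xi I> are represented by their preimages
   under pi_n: subgroups of SL(n,F) stable under multiplication by the
   scalars c I with c^n = 1 (the group <xi I>). *)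
Definition is_PSL_subgroup (F : numClosedFieldType) (n : nat) (A : mset F n) : Prop :=
  is_SL_subgroup A /\ (forall g (c : F), A g -> c ^+ n = 1 -> A (c *: g)).

(* Preimage pi_n^{-1}(pi_n(H)) of the image of a subset H of SL(n,F). *)
Definition satur (F : numClosedFieldType) (n : nat) (H : mset F n) : mset F n :=
  fun g => exists h (c : F), [/\ H h, c ^+ n = 1 & g = c *: h].

(* Irreducibility of a set of matrices acting on column vectors F^n:
   a subspace V of F^n is encoded as the row space of a matrix U whose rows
   are the (transposed) vectors of V; h V <= V reads (U *m h^T <= U)%MS. *)
Definition irreducible (F : numClosedFieldType) (n : nat) (H : mset F n) : Prop :=
  forall U : 'M[F]_n, (forall h, H h -> (U *m h^T <= U)%MS) ->
    (U <= (0 : 'M[F]_n))%MS \/ ((1%:M : 'M[F]_n) <= U)%MS.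

(* Preimage in SL(n,F) of the centralizer in PSL(n,F) of pi_n(S):
   g commutes with every s in S modulo <xi I>. *)
Definition pcent (F : numClosedFieldType) (n : nat) (S : mset F n) : mset F n :=
  fun g => \det g = 1 /\
    forall s, S s -> exists c : F, c ^+ n = 1 /\ g *m s = c *: (s *m g).

(* Z_n(H) = Z_{PSL}(pi_n(H)), as preimage in SL(n,F). *)
Definition Zn (F : numClosedFieldType) (n : nat) (H : mset F n) : mset F n :=
  pcent (satur H).

From mathcomp Require Import all_boot all_order all_algebra.
From Stdlib Require Import Classical.
Import GRing.Theory Num.Theory.
Local Open Scope ring_scope.

Set Implicit Arguments. Unset Strict Implicit. Unset Printing Implicit Defensive.

(* Every [a] in [Z_n(H)] rescales [H] under conjugation, [a h = c(h) h a].
   By Schur's lemma two such matrices with the same factor function [c] are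
   proportional, and matrices on distinct lines are linearly independent,
   their factor functions being distinct characters of [H]; so [A] meets
   finitely many lines, and we fix a transversal [R] of them.
   If [g] centralizes the centralizer [Z(A)] of [A] modulo scalars, then [g] commutes with every [y]
   commuting with [A]: for generic [t], [y - t] rescaled to determinant 1 lies
   in [Z(A)], and two such shifts force [g y = y g].  Applied to the averages
   [sum_(r in R) r x r^-1], which commute with [A], this gives a linear
   relation between the [r g] and the [r]; by independence [g] is proportional
   to an element of [A], hence in [A] by the determinant.  Finally [Z(A)]
   contains [H], so it is irreducible. *)

Lemma choice_seq (T : eqType) (U : choiceType) (y0 : U) (s : seq T) (P : T -> U -> bool) :
  (forall x, x \in s -> exists y, P x y) ->
  exists f : T -> U, forall x, x \in s -> P x (f x).
Proof.
move=> Ps; have ex x : exists y, (x \in s) ==> P x y.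
  by case xs: (x \in s); [have [y] := Ps x xs; exists y | exists y0].
by exists (fun x => xchoose (ex x)) => x xs; have /implyP/(_ xs) := xchooseP (ex x).
Qed.

Lemma free_coef_uniq (K : fieldType) (vT : vectType K) (X : seq vT) (k1 k2 : vT -> K) :
  free X -> \sum_(x <- X) k1 x *: x = \sum_(x <- X) k2 x *: x -> {in X, k1 =1 k2}.
Proof.
move=> fX E; have v_span : \sum_(x <- X) k2 x *: x \in <<X>>%VS.
  by rewrite big_seq; apply: rpred_sum => x xX; rewrite rpredZ ?memv_span.
have [k _ kU] := free_span fX v_span.
by move=> x xX; rewrite (kU k1 (esym E) x xX) (kU k2 erefl x xX).
Qed.

Lemma free_line_eq (K : fieldType) (vT : vectType K) (X : seq vT) x y :
  free X -> x \in X -> y \in X -> (x \in <[y]>)%VS -> x = y.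
Proof.
move=> fX xX yX /vlineP [k xE]; apply/eqP/negPn/negP => xy.
have := perm_free (perm_to_rem xX); rewrite fX free_cons.
move=> /esym/andP [/negP x_notin _]; apply: x_notin.
rewrite {1}xE memvZ // memv_span // (mem_rem_uniq _ (free_uniq fX)) inE yX andbT.
by rewrite eq_sym.
Qed.

Lemma mx_delta_mx_entry (F : fieldType) m n p q (U : 'M[F]_(m, n)) (V : 'M[F]_(p, q)) j k i l :
  (U *m delta_mx j k *m V) i l = U i j * V k l.
Proof.
have UdE l' : (U *m delta_mx j k) i l' = U i j * (l' == k)%:R.
  rewrite mxE (bigD1 j) //= big1 ?addr0 => [|j' /negPf j'j]; rewrite mxE ?eqxx //=.
  by rewrite j'j mulr0.
rewrite mxE (bigD1 k) //= big1 ?addr0 => [|k' /negPf k'k]; rewrite UdE ?eqxx ?mulr1 //.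
by rewrite k'k mulr0 mul0r.
Qed.

Section ProjectiveCommutation.
Variables (F : fieldType) (n : nat).
Implicit Types (c : F) (p q u h : 'M[F]_n.+1).

Lemma det1_unitmx p : \det p = 1 -> p \in unitmx.
Proof. by rewrite unitmxE => ->; rewrite unitr1. Qed.

Lemma unitmx0 : (0 : 'M[F]_n.+1) \in unitmx = false.
Proof. by rewrite unitmxE det0 unitr0. Qed.

Lemma proj_comm_neq0 q h c :
  q \in unitmx -> h \in unitmx -> q *m h = c *: (h *m q) -> c != 0.
Proof.
move=> qU hU E; apply/eqP => c0.
by have := unitmx_mul q h; rewrite E c0 scale0r unitmx0 qU hU.
Qed.

Lemma proj_comm_mul u q h c d :
  u *m h = c *: (h *m u) -> q *m h = d *: (h *m q) ->
  (u *m q) *m h = (c * d) *: (h *m (u *m q)).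
Proof.
move=> Eu Eq; rewrite -mulmxA Eq -scalemxAr [u *m (h *m q)]mulmxA Eu.
by rewrite -scalemxAl scalerA mulmxA mulrC.
Qed.

Lemma proj_comm_invmx q h c :
  q \in unitmx -> c != 0 -> q *m h = c *: (h *m q) ->
  invmx q *m h = c^-1 *: (h *m invmx q).
Proof.
move=> qU c0 E; apply: (can_inj (mulKmx qU)); apply: (can_inj (mulmxK qU)).
rewrite mulKVmx // -!scalemxAr -!scalemxAl !mulmxA mulmxKV // E.
by rewrite scalerA mulVf // scale1r.
Qed.

Lemma proj_comm_divmx p q h c :
  q \in unitmx -> c != 0 -> p *m h = c *: (h *m p) -> q *m h = c *: (h *m q) ->
  (p *m invmx q) *m h = h *m (p *m invmx q).
Proof.
move=> qU c0 Ep Eq; rewrite (proj_comm_mul Ep (proj_comm_invmx qU c0 Eq)).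
by rewrite mulfV // scale1r.
Qed.

Lemma proj_comm_factor_uniq q h c d :
  q \in unitmx -> h \in unitmx ->
  q *m h = c *: (h *m q) -> q *m h = d *: (h *m q) -> c = d.
Proof.
move=> qU hU -> /eqP; rewrite -subr_eq0 -scalerBl scaler_eq0 subr_eq0.
case/orP=> [/eqP // | /eqP hq0].
by have := unitmx_mul h q; rewrite hq0 hU qU unitmx0.
Qed.

End ProjectiveCommutation.

Definition proj_cent (F : fieldType) n (H : 'M[F]_n -> Prop) (u : 'M[F]_n) :=
  u \in unitmx /\ forall h, H h -> exists c, u *m h = c *: (h *m u).

Section IrreducibleProjCent.
Variables (F : numClosedFieldType) (n : nat) (H : mset F n.+1).
Hypotheses (sH : is_SL_subgroup H) (iH : irreducible H).

Lemma schur_scalar x : (forall h, H h -> x *m h = h *m x) -> exists l, x = l%:M.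
Proof.
move=> cx; have [a ea] : exists a, eigenvalue x^T a.
  have /closed_rootP [a rAa] : size (char_poly x^T) != 1%N by rewrite size_char_poly.
  by exists a; rewrite eigenvalue_root_char.
set U := eigenspace x^T a.
have EU : U *m x^T = a *: U by apply/eigenspaceP.
have [U0 | full] : (U <= (0 : 'M_n.+1))%MS \/ ((1%:M : 'M_n.+1) <= U)%MS.
  apply: (iH (U := U)) => h Hh; apply/eigenspaceP.
  by rewrite -mulmxA -trmx_mul cx // trmx_mul mulmxA EU -scalemxAl.
by move: ea; rewrite /eigenvalue -/U -submx0 U0.
exists a; have := eigenspaceP full; rewrite mul1mx => E.
by rewrite -[x]trmxK E scalemx1 tr_scalar_mx.
Qed.

Lemma SL_unitmx h : H h -> h \in unitmx.
Proof. by case: sH => dH _ _ _ /dH/det1_unitmx. Qed.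

Lemma proj_cent_mul u w : proj_cent H u -> proj_cent H w -> proj_cent H (u *m w).
Proof.
move=> [uU cu] [wU cw]; split; first by rewrite unitmx_mul uU wU.
move=> h Hh; have [c1 E1] := cu h Hh; have [c2 E2] := cw h Hh.
by exists (c1 * c2); apply: proj_comm_mul.
Qed.

(* Schur applied to [u w (w u)^-1], which commutes with [H]. *)
Lemma proj_cent_comm u w : proj_cent H u -> proj_cent H w ->
  exists b, u *m w = b *: (w *m u).
Proof.
move=> [uU cu] [wU cw].
have wuU : w *m u \in unitmx by rewrite unitmx_mul uU wU.
have [|b Eb] := schur_scalar (x := u *m w *m invmx (w *m u)).
  move=> h Hh; have [c1 E1] := cu h Hh; have [c2 E2] := cw h Hh.
  have Ewu := proj_comm_mul E2 E1; rewrite mulrC in Ewu.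
  have c0 := proj_comm_neq0 wuU (SL_unitmx Hh) Ewu.
  exact: proj_comm_divmx wuU c0 (proj_comm_mul E1 E2) Ewu.
by exists b; rewrite -(mulmxKV wuU (u *m w)) Eb mul_scalar_mx scalemxAl.
Qed.

Lemma proj_cent_same_factor u w : proj_cent H u -> proj_cent H w ->
  (forall h, H h -> forall c d,
     u *m h = c *: (h *m u) -> w *m h = d *: (h *m w) -> c = d) ->
  (u \in <[w]>)%VS.
Proof.
move=> [uU cu] [wU cw] same.
have [|b Eb] := schur_scalar (x := u *m invmx w).
  move=> h Hh; have [c1 E1] := cu h Hh; have [c2 E2] := cw h Hh.
  have c12 := same h Hh c1 c2 E1 E2; subst c1.
  exact: proj_comm_divmx wU (proj_comm_neq0 wU (SL_unitmx Hh) E2) E1 E2.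
by apply/vlineP; exists b; rewrite -(mulmxKV wU u) Eb mul_scalar_mx.
Qed.

(* Coefficients on a free family are unique, and multiplying [u = \sum k_y y]
   by [h] rescales each [y] by its own factor; so a nonzero [k_x] forces
   [u] and [x] to have the same factor at every [h]. *)
Lemma proj_cent_notin_span s u : free s ->
  (forall v, v \in s -> proj_cent H v) -> proj_cent H u ->
  (forall v, v \in s -> u \notin <[v]>%VS) -> u \notin <<s>>%VS.
Proof.
move=> fs sG [uU cu] nline; apply/negP => /(free_span fs) [k uk _].
have [x xs kx0] : exists2 x, x \in s & k x != 0.
  apply/hasP; apply: contraTT uU => /hasPn k0.
  by rewrite uk big_seq big1 ?unitmx0 // => y /k0/negPn/eqP ->; rewrite scale0r.
apply: (negP (nline x xs)); apply: proj_cent_same_factor (sG x xs) _ => [//|h Hh c d Eu Ex].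
have hU := SL_unitmx Hh.
have [cf cfP] : exists cf, forall y, y \in s -> y *m h == cf y *: (h *m y).
  apply: (choice_seq 0 (P := fun y e => y *m h == e *: (h *m y))) => y ys.
  by have [e /eqP] := proj2 (sG y ys) h Hh; exists e.
rewrite (proj_comm_factor_uniq (proj1 (sG x xs)) hU Ex (eqP (cfP x xs))).
have /free_coef_uniq : \sum_(y <- s) (k y * cf y) *: y = \sum_(y <- s) (c * k y) *: y.
  have -> : \sum_(y <- s) (c * k y) *: y = c *: u.
    by rewrite uk scaler_sumr; apply: eq_bigr => y _; rewrite scalerA.
  apply: (can_inj (mulKmx hU)); rewrite -scalemxAr -Eu uk mulmx_suml mulmx_sumr.
  by apply: eq_big_seq => y ys; rewrite -scalemxAl (eqP (cfP y ys)) -!scalemxAr scalerA.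
by move=> /(_ fs x xs); rewrite mulrC => /(mulIf kx0) ->.
Qed.

Lemma proj_cent_free s : (forall v, v \in s -> proj_cent H v) ->
  pairwise (fun u v => u \notin <[v]>%VS) s -> free s.
Proof.
elim: s => [|u s IHs] sG; first by rewrite nil_free.
rewrite /= => /andP [/allP u_lines pw_s].
have sG' v : v \in s -> proj_cent H v by move=> vs; apply: sG; rewrite inE vs orbT.
have fs := IHs sG' pw_s.
by rewrite free_cons fs andbT proj_cent_notin_span //; apply: sG; rewrite mem_head.
Qed.

End IrreducibleProjCent.

Section ConjugationAverage.
Variables (F : fieldType) (n : nat).
Implicit Types (R : seq 'M[F]_n.+1) (b g x : 'M[F]_n.+1).

Definition conj_avg R x := \sum_(r <- R) r *m x *m invmx r.

Lemma conj_avg_comm R b x : free R -> {in R, forall r, r \in unitmx} -> b \in unitmx ->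
  (forall r, r \in R -> exists2 r', r' \in R & (b *m r \in <[r']>)%VS) ->
  b *m conj_avg R x = conj_avg R x *m b.
Proof.
move=> fR RU bU bR.
have [sig sigP] : exists sig, forall r, r \in R -> (sig r \in R) && (b *m r \in <[sig r]>)%VS.
  apply: (choice_seq 0 (P := fun r r' => (r' \in R) && (b *m r \in <[r']>)%VS)).
  by move=> r /bR [r' r'R brr']; exists r'; rewrite r'R.
have sig_conj r : r \in R -> b *m (r *m x *m invmx r) = sig r *m x *m invmx (sig r) *m b.
  move=> rR; have /andP [sigrR /vlineP [l El]] := sigP r rR.
  apply: (can_inj (mulmxK (RU r rR))).
  rewrite -(mulmxA b) mulmxKV ?RU // mulmxA El -(mulmxA _ b) El -scalemxAr mulmxKV ?RU //.
  by rewrite scalemxAl.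
have sig_inj : {in R &, injective sig}.
  move=> r1 r2 r1R r2R e.
  have /andP [_ /vlineP [l1 E1]] := sigP r1 r1R; have /andP [_ /vlineP [l2 E2]] := sigP r2 r2R.
  have l2_neq0 : l2 != 0.
    apply: contraNneq (free_not0 fR r2R) => l20.
    by apply/eqP/(can_inj (mulKmx bU)); rewrite E2 l20 scale0r mulmx0.
  apply: free_line_eq fR r1R r2R _; apply/vlineP; exists (l1 / l2).
  by apply: (can_inj (mulKmx bU)); rewrite E1 e -scalemxAr E2 scalerA divfK.
have sig_perm : perm_eq (map sig R) R.
  have sig_uniq : uniq (map sig R) by rewrite map_inj_in_uniq // free_uniq.
  have sigR : {subset map sig R <= R} by move=> _ /mapP [r rR ->]; case/andP: (sigP r rR).
  have [_ E] := uniq_min_size sig_uniq sigR (eq_leq (esym (size_map sig R))).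
  exact: uniq_perm sig_uniq (free_uniq fR) E.
rewrite /conj_avg mulmx_suml mulmx_sumr (eq_big_seq _ sig_conj).
rewrite -(big_map sig xpredT (fun r => r *m x *m invmx r *m b)).
by rewrite (perm_big _ sig_perm).
Qed.

(* Comparing the entries of [g P(E_jk) = P(E_jk) g], [P := conj_avg R], for
   the matrix units [E_jk] gives a linear relation between the [r g] and the [r]. *)
Lemma conj_avg_comm_not_free R r0 g : r0 \in R -> {in R, forall r, r \in unitmx} ->
  g \in unitmx -> (forall r, r \in R -> exists c, g *m r = c *: (r *m g)) ->
  (forall x, g *m conj_avg R x = conj_avg R x *m g) ->
  ~~ free (map (mulmx^~ g) R ++ R).
Proof.
move=> r0R RU gU gR gP; apply/negP; rewrite cat_free => /and3P [_ fR /directv_addP cap0].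
have [bt btP] : exists bt, forall r, r \in R -> g *m r == bt r *: (r *m g).
  apply: (choice_seq 0 (P := fun r c => g *m r == c *: (r *m g))) => r rR.
  by have [c /eqP] := gR r rR; exists c.
have relation k q : \sum_(r <- R) (bt r * invmx r k q) *: (r *m g) =
                    \sum_(r <- R) (invmx r *m g) k q *: r.
  apply/matrixP => p j; have /matrixP /(_ p q) := gP (delta_mx j k).
  rewrite /conj_avg mulmx_sumr mulmx_suml !summxE.
  have Lr r : r \in R -> (g *m (r *m delta_mx j k *m invmx r)) p q =
                         (bt r * invmx r k q) * (r *m g) p j.
    move=> rR; rewrite !mulmxA (eqP (btP r rR)) -!scalemxAl mxE mx_delta_mx_entry.
    by rewrite mulrAC mulrA.
  have Rr r : (r *m delta_mx j k *m invmx r *m g) p q = (invmx r *m g) k q * r p j.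
    by rewrite -mulmxA mx_delta_mx_entry mulrC.
  rewrite (eq_big_seq _ Lr) (eq_bigr _ (fun r _ => Rr r)) => E.
  by under eq_bigr do rewrite mxE; under [RHS]eq_bigr do rewrite mxE.
have combination0 k q : \sum_(r <- R) (invmx r *m g) k q *: r = 0.
  apply/eqP; rewrite -memv0 -cap0 memv_cap; apply/andP; split.
    rewrite -relation big_seq; apply: rpred_sum => r rR.
    by rewrite rpredZ // memv_span //; apply: map_f.
  by rewrite big_seq; apply: rpred_sum => r rR; rewrite rpredZ // memv_span.
have r0g0 : invmx r0 *m g = 0.
  apply/matrixP => k q; rewrite [RHS]mxE.
  apply: (free_coef_uniq (k1 := fun r => (invmx r *m g) k q) (k2 := fun=> 0) fR _ r0R).
  by rewrite combination0 big1 // => r _; rewrite scale0r.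
by have := unitmx_mul (invmx r0) g; rewrite r0g0 unitmx0 unitmx_inv RU ?gU.
Qed.

End ConjugationAverage.

Lemma exists_nonroot (F : numDomainType) (p : {poly F}) : p != 0 -> exists t, ~~ root p t.
Proof.
move=> p0; set ts := [seq i%:R | i <- iota 0 (size p)] : seq F.
have [/hasP [t _ rt] | /hasPn all_roots] := boolP (has (fun t => ~~ root p t) ts).
  by exists t.
have : (size ts < size p)%N.
  apply: max_poly_roots => //; first by apply/allP => t /all_roots; rewrite negbK.
  by rewrite map_inj_uniq ?iota_uniq // => i j /eqP; rewrite eqr_nat => /eqP.
by rewrite size_map size_iota ltnn.
Qed.

Lemma exists_two_nonroots (F : numDomainType) (p : {poly F}) : p != 0 ->
  exists t1 t2, [/\ t1 != t2, ~~ root p t1 & ~~ root p t2].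
Proof.
move=> p0; have [t1 r1] := exists_nonroot p0.
have q0 : p * ('X - t1%:P) != 0 by rewrite mulf_neq0 // polyXsubC_eq0.
have [t2] := exists_nonroot q0; rewrite rootM root_XsubC negb_or => /andP [r2 ne].
by exists t1, t2; rewrite eq_sym ne.
Qed.

(* Each invertible shift gives [g x - c x g = (1 - c) t g]; two shifts with
   distinct factors make [x] scalar, and equal factors force [c = 1]. *)
Lemma comm_of_proj_comm_shifts (F : numFieldType) n (g x : 'M[F]_n.+1) :
  g \in unitmx ->
  (forall t, x - t%:M \in unitmx ->
     exists c, g *m (x - t%:M) = c *: ((x - t%:M) *m g)) ->
  g *m x = x *m g.
Proof.
move=> gU shiftP.
have g0 : g != 0 by apply: contraTneq gU => ->; rewrite unitmx0.
have shiftE t c : g *m (x - t%:M) = c *: ((x - t%:M) *m g) ->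
    g *m x - c *: (x *m g) = ((1 - c) * t) *: g.
  rewrite mulmxBr mulmxBl mul_mx_scalar mul_scalar_mx scalerBr scalerA => E.
  rewrite -[g *m x](subrK (t *: g)) E mulrBl mul1r scalerBl.
  by rewrite -addrA addrC addrA subrK.
have shiftU t : ~~ root (char_poly x) t -> x - t%:M \in unitmx.
  rewrite -eigenvalue_root_char /eigenvalue /eigenspace negbK kermx_eq0.
  by rewrite row_free_unit.
have [t1 [t2 [t12 r1 r2]]] := exists_two_nonroots (monic_neq0 (char_poly_monic x)).
have [c1 /shiftE E1] := shiftP _ (shiftU _ r1).
have [c2 /shiftE E2] := shiftP _ (shiftU _ r2).
have [c12 | c12] := eqVneq c1 c2.
  move: E2; rewrite -c12 E1 => /eqP; rewrite -subr_eq0 -scalerBl scaler_eq0 (negPf g0) orbF.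
  rewrite -mulrBr mulf_eq0 !subr_eq0 (negPf t12) orbF => /eqP c1E.
  by move: E1; rewrite -c1E subrr mul0r scale0r scale1r => /eqP; rewrite subr_eq0 => /eqP.
have : (c1 - c2) *: (x *m g) = ((1 - c2) * t2 - (1 - c1) * t1) *: g.
  by rewrite [RHS]scalerBl -E1 -E2 scalerBl opprB [RHS]addrC addrA subrK.
move=> /(congr1 (fun M => (c1 - c2)^-1 *: M)); rewrite !scalerA mulVf ?subr_eq0 // scale1r.
set mu := _ * _ => Exg.
have -> : x = mu%:M by apply: (can_inj (mulmxK gU)); rewrite Exg mul_scalar_mx.
by rewrite scalar_mxC.
Qed.

Lemma ex_maxn_bounded (Q : nat -> Prop) N : Q 0%N -> (forall k, Q k -> (k <= N)%N) ->
  exists2 k, Q k & forall k', Q k' -> (k' <= k)%N.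
Proof.
move=> Q0 QN; apply: NNPP => no_max.
have unbounded m : exists k, Q k /\ (m <= k)%N.
  elim: m => [|m [k [Qk mk]]]; first by exists 0%N.
  apply: NNPP => no_above; apply: no_max; exists k => // k' Qk'.
  rewrite leqNgt; apply/negP => kk'; apply: no_above; exists k'; split => //.
  exact: leq_ltn_trans mk kk'.
have [k [Qk Nk]] := unbounded N.+1.
by have := QN k Qk; rewrite leqNgt (leq_trans (leqnn N.+1) Nk).
Qed.

Section DoubleCommutant.
Variables (F : numClosedFieldType) (n : nat) (H A : mset F n.+1).
Hypotheses (sH : is_SL_subgroup H) (iH : irreducible H) (pA : is_PSL_subgroup A).
Hypothesis AH : forall a, A a -> proj_cent H a.

Lemma line_transversal : exists R, [/\ {in R, forall r, A r},
    pairwise (fun u v => u \notin <[v]>%VS) R &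
    forall a, A a -> exists2 r, r \in R & (a \in <[r]>)%VS].
Proof.
pose Q k := exists R, [/\ {in R, forall r, A r},
  pairwise (fun u v => u \notin <[v]>%VS) R & size R = k].
have [k [R [RA pwR sizeR]] kmax] : exists2 k, Q k & forall k', Q k' -> (k' <= k)%N.
  apply: (@ex_maxn_bounded Q (\dim (fullv : {vspace 'M[F]_n.+1}))); first by exists [::].
  move=> _ [R [RA pwR <-]].
  have /eqP <- := proj_cent_free sH iH (fun r rR => AH (RA r rR)) pwR.
  exact/dimvS/subvf.
exists R; split => // a Aa; apply: NNPP => a_new.
suff /kmax : Q k.+1 by rewrite ltnn.
exists (a :: R); split; last by rewrite /= sizeR.
  by move=> r; rewrite inE => /predU1P [-> | /RA].
rewrite /= pwR andbT; apply/allP => r rR; apply/negP => ar.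
by apply: a_new; exists r.
Qed.

Lemma double_commutant_line g : proj_cent H g ->
  (forall x, (forall a, A a -> x *m a = a *m x) -> g *m x = x *m g) ->
  exists2 a, A a & (g \in <[a]>)%VS.
Proof.
move=> gH g_comm; have [[_ A1 AM AV] _] := pA; have gU := proj1 gH.
have [R [RA pwR Rlines]] := line_transversal.
have RH r : r \in R -> proj_cent H r by move/RA/AH.
have RU : {in R, forall r, r \in unitmx} by move=> r /RH [].
have fR := proj_cent_free sH iH RH pwR.
have [r0 r0R _] := Rlines _ A1.
have gR r : r \in R -> exists c, g *m r = c *: (r *m g).
  by move=> /RH rH; have := proj_cent_comm sH iH gH rH.
have g_avg x : g *m conj_avg R x = conj_avg R x *m g.
  apply: g_comm => a Aa; apply/esym/conj_avg_comm => //; first by case: (AH Aa).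
  by move=> r /RA/(AM _ _ Aa)/Rlines.
apply: NNPP => g_off.
have /negP not_free := conj_avg_comm_not_free r0R RU gU gR g_avg; apply: not_free.
apply: (proj_cent_free sH iH).
  move=> v; rewrite mem_cat => /orP [/mapP [r /RH rH ->] | /RH //].
  exact: proj_cent_mul.
rewrite pairwise_cat pairwise_map pwR andbT; apply/andP; split.
  apply/allrelP => _ v /mapP [r rR ->] vR; apply/negP => /vlineP [l El].
  apply: g_off; exists (invmx r *m v); first exact: AM (AV _ (RA _ rR)) (RA _ vR).
  by apply/vlineP; exists l; rewrite scalemxAr -El mulKmx // RU.
apply: sub_pairwise pwR => u v /negP nuv; apply/negP => /vlineP [l El]; apply: nuv.
by apply/vlineP; exists l; apply: (can_inj (mulmxK gU)); rewrite El scalemxAl.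
Qed.

End DoubleCommutant.

Section Centralizers.
Variables (F : numClosedFieldType) (n : nat).
Implicit Types (S T : mset F n.+1) (g : 'M[F]_n.+1).

Lemma rootn_neq0 (c : F) : c ^+ n.+1 = 1 -> c != 0.
Proof. by move=> cn; apply: contra_eq_neq cn => ->; rewrite expr0n /= eq_sym oner_neq0. Qed.

Lemma pcentS S T g : (forall s, S s -> T s) -> pcent T g -> pcent S g.
Proof. by move=> ST [dg Pg]; split => // s /ST; apply: Pg. Qed.

Lemma pcent_proj_cent S g : pcent S g -> proj_cent S g.
Proof.
move=> [dg Pg]; split; first exact: det1_unitmx.
by move=> s /Pg [c [_ E]]; exists c.
Qed.

Lemma pcent_swap S T : (forall s, S s -> \det s = 1) ->
  (forall t, T t -> pcent S t) -> forall s, S s -> pcent T s.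
Proof.
move=> dS TS s Ss; split; first exact: dS.
move=> t Tt; have [_ /(_ s Ss) [c [cn E]]] := TS t Tt.
exists c^-1; split; first by rewrite exprVn cn invr1.
by rewrite E scalerA mulVf ?scale1r // rootn_neq0.
Qed.

Lemma pcent_PSL S : is_PSL_subgroup (pcent S).
Proof.
split; first split.
- by move=> g [].
- split; first exact: det1.
  by move=> s _; exists 1; rewrite expr1n mul1mx mulmx1 scale1r.
- move=> g1 g2 [d1 P1] [d2 P2]; split; first by rewrite det_mulmx d1 d2 mulr1.
  move=> s Ss; have [c1 [e1 E1]] := P1 s Ss; have [c2 [e2 E2]] := P2 s Ss.
  by exists (c1 * c2); rewrite exprMn e1 e2 mulr1 (proj_comm_mul E1 E2).
- move=> g [dg Pg]; split; first by rewrite det_inv dg invr1.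
  move=> s Ss; have [c [e E]] := Pg s Ss.
  exists c^-1; split; first by rewrite exprVn e invr1.
  exact: proj_comm_invmx (det1_unitmx dg) (rootn_neq0 e) E.
move=> g c [dg Pg] e; split; first by rewrite detZ dg e mulr1.
move=> s Ss; have [c' [e' E]] := Pg s Ss; exists c'; split => //.
by rewrite -scalemxAl E -scalemxAr scalerA mulrC -scalerA.
Qed.

(* An invertible [y] commuting with [S] is, after rescaling by an [n.+1]-th
   root of [(\det y)^-1], an element of [pcent S]. *)
Lemma pcent_pcent_comm S g : pcent (pcent S) g ->
  forall x, (forall s, S s -> x *m s = s *m x) -> g *m x = x *m g.
Proof.
move=> [dg Pg] x xS; apply: comm_of_proj_comm_shifts (det1_unitmx dg) _ => t.
set y := x - t%:M => yU.
have y_comm s : S s -> y *m s = s *m y.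
  by move=> Ss; rewrite mulmxBl mulmxBr xS // scalar_mxC.
have dy : \det y != 0 by rewrite -unitfE -unitmxE.
pose r := n.+1.-root (\det y)^-1.
have rn : r ^+ n.+1 = (\det y)^-1 by rewrite rootCK.
have r0 : r != 0 by apply: contra_eq_neq rn => ->; rewrite expr0n /= eq_sym invr_eq0.
have [|c [_ E]] := Pg (r *: y).
  split; first by rewrite detZ rn mulVf.
  by move=> s Ss; exists 1; rewrite expr1n scale1r -scalemxAl y_comm // scalemxAr.
exists c; apply: (scalerI r0); move: E.
by rewrite -scalemxAr -scalemxAl scalerA mulrC -scalerA.
Qed.

End Centralizers.

Unset Implicit Arguments. Set Strict Implicit.

Theorem mainTheorem6 (F : numClosedFieldType) (n : nat) (H A : mset F n) :
  (0 < n)%N ->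
  is_SL_subgroup H -> irreducible H ->
  is_PSL_subgroup A -> (forall g, A g -> Zn H g) ->
  (forall g, pcent (pcent A) g <-> A g) /\
  (exists B : mset F n,
      [/\ is_PSL_subgroup B, irreducible B & forall g, pcent B g <-> A g]).
Proof.
case: n H A => // n H A _ sH iH pA AZn.
have [[dA _ _ _] AZ] := pA; have [dH _ _ _] := sH.
have A_pcentH a : A a -> pcent H a.
  by move/AZn; apply: pcentS => h Hh; exists h, 1; rewrite expr1n scale1r.
have H_pcentA : forall h, H h -> pcent A h := pcent_swap dH A_pcentH.
have AH a : A a -> proj_cent H a by move/A_pcentH/pcent_proj_cent.
have pcent2 g : pcent (pcent A) g <-> A g.
  split; last exact: (pcent_swap (T := pcent A) dA (fun _ At => At)).
  move=> gA2; have gH : proj_cent H g by apply/pcent_proj_cent/(pcentS H_pcentA).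
  have [a Aa /vlineP [l gE]] := double_commutant_line sH iH pA AH gH (pcent_pcent_comm gA2).
  have ln : l ^+ n.+1 = 1 by move: (proj1 gA2); rewrite gE detZ dA // mulr1.
  by rewrite gE; apply: AZ.
split => //; exists (pcent A); split => //; first exact: pcent_PSL.
by move=> U HU; apply: iH => h Hh; apply: HU; apply: H_pcentA.
Qed.
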